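(* Consider the operational scenario of a multi-task model with three tasks and binary labels $y\in\{\pm1\}$ (preparations $\mathbf{S}_{\vec{x}}$, $\vec{x}\in D$; effects $\mathbf{E}^k_{\pm}$, $k=1,2,3$, together with $\Omega$ and $\emptyset$). Suppose the effect densities satisfy the operational equivalence $$\tfrac13\mathbf{E}^1_{+}+\tfrac13\mathbf{E}^2_{+}+\tfrac13\mathbf{E}^3_{+}\ \sim\ \tfrac13\mathbf{E}^1_{-}+\tfrac13\mathbf{E}^2_{-}+\tfrac13\mathbf{E}^3_{-},$$ and that $s_1,\dots,s_6$ are preparation densities satisfying $$\tfrac12 s_1+\tfrac12 s_2\ \sim\ \tfrac12 s_3+\tfrac12 s_4\ \sim\ \tfrac12 s_5+\tfrac12 s_6.$$ If the multi-task model is noncontextual, then $$P(\mathbf{E}^1_+\mid s_1)+P(\mathbf{E}^2_+\mid s_3)+P(\mathbf{E}^3_+\mid s_5)\le\tfrac52.$$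
   Context: A multi-task model is a family of conditional distributions $\mathcal{P}^k(y\mid\vec{x})$, $k=1,2,3$, $y\in\{\pm1\}$, $\vec{x}\in D$. Its operational scenario has preparations $\mathbf{S}_{\vec{x}}$, effects $\mathbf{E}^k_y$, trivial effect $\Omega$ and null effect $\emptyset$, with statistics $P(\mathbf{E}^k_y\mid\mathbf{S}_{\vec{x}})=\mathcal{P}^k(y\mid\vec{x})$, $P(\Omega\mid\mathbf{S})=1$, $P(\emptyset\mid\mathbf{S})=0$. Preparation (resp. effect) densities are finite convex combinations of preparations (resp. effects), with statistics extended bilinearly. Two preparation densities are operationally equivalent ($\sim$) iff they give equal probabilities for all effects; two effect densities are operationally equivalent iff they give equal probabilities for all preparations. An ontological model consists of a measure space $\Lambda$, a probability density $\mu_{\mathbf{S}}$ on $\Lambda$ for each preparation and a response function $\xi_{\mathbf{E}}:\Lambda\to[0,1]$ for each effect, with $\xi_\Omega\equiv1$, $\xi_\emptyset\equiv0$, extended linearly to densities, such that $P(\mathbf{E}\mid\mathbf{S})=\int_\Lambda\mu_{\mathbf{S}}(\lambda)\xi_{\mathbf{E}}(\lambda)d\lambda$. It is noncontextual if operationally equivalent preparation densities have identical $\mu$ and operationally equivalent effect densities have identical $\xi$. The multi-task model is noncontextual iff its operational scenario admits a noncontextual ontological model. *)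

From HB Require Import structures.
From mathcomp Require Import all_boot all_order all_algebra.
From mathcomp Require Import all_classical all_reals all_analysis.

Set Implicit Arguments.
Unset Strict Implicit.
Unset Printing Implicit Defensive.

Import Order.TTheory GRing.Theory Num.Theory.
Local Open Scope ring_scope.

(* Task indices k = 1,2,3 are represented by 'I_3 (values 0,1,2);
   labels y = +1 / -1 are represented by true / false. *)
Definition task1 : 'I_3 := @Ordinal 3 0 isT.
Definition task2 : 'I_3 := @Ordinal 3 1 isT.
Definition task3 : 'I_3 := @Ordinal 3 2 isT.

Section MultiTask.
Variables (R : realType) (D : Type).

(* A multi-task model: P k y x = P^k(y | x). *)
Definition multitask_model (P : 'I_3 -> bool -> D -> R) : Prop :=
  (forall k y x, 0 <= P k y x) /\ (forall k x, P k true x + P k false x = 1).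

Inductive effect : Type := Eff of 'I_3 & bool | Omega | Null.

Definition Pop (P : 'I_3 -> bool -> D -> R) (e : effect) (x : D) : R :=
  match e with Eff k y => P k y x | Omega => 1 | Null => 0 end.

(* A density (finite convex combination) over T, as a list of
   (weight, element) pairs with nonnegative weights summing to 1. *)
Definition density (T : Type) (s : seq (R * T)) : Prop :=
  all (fun p => 0 <= p.1) s /\ \sum_(p <- s) p.1 = 1.

Definition mix2 (T : Type) (a : R) (s : seq (R * T)) (b : R) (t : seq (R * T)) :
  seq (R * T) :=
  [seq (a * p.1, p.2) | p <- s] ++ [seq (b * p.1, p.2) | p <- t].

Definition Pprep (P : 'I_3 -> bool -> D -> R) (e : effect) (s : seq (R * D)) : R :=
  \sum_(p <- s) p.1 * Pop P e p.2.

Definition Peff (P : 'I_3 -> bool -> D -> R) (f : seq (R * effect)) (x : D) : R :=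
  \sum_(q <- f) q.1 * Pop P q.2 x.

Definition prep_equiv P (s s' : seq (R * D)) : Prop :=
  forall e : effect, Pprep P e s = Pprep P e s'.

Definition effect_equiv P (f f' : seq (R * effect)) : Prop :=
  forall x : D, Peff P f x = Peff P f' x.

Definition mu_dens (L : Type) (mu : D -> L -> R) (s : seq (R * D)) (l : L) : R :=
  \sum_(p <- s) p.1 * mu p.2 l.
Definition xi_dens (L : Type) (xi : effect -> L -> R) (f : seq (R * effect)) (l : L) : R :=
  \sum_(q <- f) q.1 * xi q.2 l.

Local Open Scope ereal_scope.

Definition ontological_model (P : 'I_3 -> bool -> D -> R)
    (d : measure_display) (L : measurableType d) (nu : {measure set L -> \bar R})
    (mu : D -> L -> R) (xi : effect -> L -> R) : Prop :=
  [/\ (forall x, measurable_fun [set: L] (mu x)),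
      (forall x l, (0 <= mu x l)%R) &
      (forall x, \int[nu]_l (mu x l)%:E = 1)] /\
  [/\ (forall e, measurable_fun [set: L] (xi e)),
      (forall e l, (0 <= xi e l <= 1)%R),
      (forall l, xi Omega l = 1%R) &
      (forall l, xi Null l = 0%R)] /\
  (forall e x, \int[nu]_l (mu x l * xi e l)%:E = (Pop P e x)%:E).

Local Close Scope ereal_scope.

Definition noncontextual_model P (L : Type) (mu : D -> L -> R) (xi : effect -> L -> R) : Prop :=
  (forall s s' : seq (R * D), density s -> density s' -> prep_equiv P s s' ->
     forall l, mu_dens mu s l = mu_dens mu s' l) /\
  (forall f f' : seq (R * effect), density f -> density f' -> effect_equiv P f f' ->
     forall l, xi_dens xi f l = xi_dens xi f' l).

Definition noncontextual (P : 'I_3 -> bool -> D -> R) : Prop :=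
  exists (d : measure_display) (L : measurableType d) (nu : {measure set L -> \bar R})
         (mu : D -> L -> R) (xi : effect -> L -> R),
    ontological_model P nu mu xi /\ noncontextual_model P mu xi.

End MultiTask.

From HB Require Import structures.
From mathcomp Require Import all_boot all_order all_algebra.
From mathcomp Require Import all_classical all_reals all_analysis.
From mathcomp Require Import measurable_realfun lra.
(* The effect equivalence
   1/2 E^k_+ + 1/2 E^k_- ~ 1/2 Omega + 1/2 Null forces xi(E^k_-) = 1 - xi(E^k_+), so the
   assumed effect equivalence gives x1 + x2 + x3 = 3/2 for x_k = xi(E^k_+) at every
   ontic state.  Preparation noncontextuality gives the three mixtures one common
   density m, hence a = mu_s1, b = mu_s3, c = mu_s5 lie in [0, 2m].  Under these
   constraints a x1 + b x2 + c x3 <= (a + b + c)/2 + m pointwise, and integrating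
   gives the bound 3/2 + 1.  The integration is done once for arbitrary signed
   combinations of statistics P(e | s), which is legitimate because every
   mu_x * xi_e is integrable. *)

Set Implicit Arguments.
Unset Strict Implicit.
Unset Printing Implicit Defensive.

Import Order.TTheory GRing.Theory Num.Theory.
Local Open Scope ring_scope.

Lemma mu_dens_mix2 (R : realType) (D L : Type) (mu : D -> L -> R) a s b t l :
  mu_dens mu (mix2 a s b t) l = a * mu_dens mu s l + b * mu_dens mu t l.
Proof.
by rewrite /mu_dens big_cat !big_map !mulr_sumr; congr (_ + _);
  apply: eq_bigr => p _; rewrite mulrA.
Qed.

Lemma density_mix2 (R : realType) (T : Type) (a b : R) (s t : seq (R * T)) :
  0 <= a -> 0 <= b -> a + b = 1 -> density s -> density t ->
  density (mix2 a s b t).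
Proof.
move=> a0 b0 ab1 [s0 s1] [t0 t1]; split.
  by rewrite all_cat !all_map; apply/andP; split;
    [apply: sub_all s0 | apply: sub_all t0] => p /= p0; exact: mulr_ge0.
by rewrite big_cat !big_map -!mulr_sumr s1 t1 !mulr1.
Qed.

Lemma Pprep_Omega (R : realType) (D : Type) (P : 'I_3 -> bool -> D -> R) s :
  density s -> Pprep P Omega s = 1.
Proof. by case=> _ <-; apply: eq_bigr => p _; rewrite mulr1. Qed.

Lemma weighted_sum3_le (R : realFieldType) (a b c m x1 x2 x3 : R) :
  0 <= a <= 2 * m -> 0 <= b <= 2 * m -> 0 <= c <= 2 * m ->
  0 <= x1 <= 1 -> 0 <= x2 <= 1 -> 0 <= x3 <= 1 -> x1 + x2 + x3 = 3 / 2 ->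
  a * x1 + b * x2 + c * x3 <= (a + b + c) / 2 + m.
Proof.
move=> /andP[? ?] /andP[? ?] /andP[? ?] /andP[? ?] /andP[? ?] /andP[? ?] sum_x.
have -> : x3 = 3 / 2 - x1 - x2 by lra.
by have [|] := lerP x1 (1 / 2); have [|] := lerP x2 (1 / 2); nra.
Qed.

Section NoncontextualModel.
Variables (R : realType) (D : Type) (P : 'I_3 -> bool -> D -> R).
Variables (d : measure_display) (L : measurableType d).
Variables (nu : {measure set L -> \bar R}) (mu : D -> L -> R) (xi : effect -> L -> R).
Hypothesis model : ontological_model P nu mu xi.

Lemma mu_dens_ge0 s l : density s -> 0 <= mu_dens mu s l.
Proof.
case: model => -[_ mu_ge0 _] _ [+ _]; rewrite /mu_dens.
elim: s => [|p s IH] /=; first by rewrite big_nil.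
by case/andP=> p0 /IH ?; rewrite big_cons addr_ge0 // mulr_ge0.
Qed.

Lemma mu_dens_le_mix2 s s' l : density s -> density s' ->
  0 <= mu_dens mu s l <= 2 * mu_dens mu (mix2 2^-1 s 2^-1 s') l.
Proof.
move=> /(mu_dens_ge0 l) s_ge0 /(mu_dens_ge0 l) s'_ge0.
by rewrite s_ge0 mu_dens_mix2 /=; lra.
Qed.

Lemma mu_xi_integrable x e : nu.-integrable setT (fun l => (mu x l * xi e l)%:E).
Proof.
case: model => -[mu_m mu_ge0 _] [[xi_m xi_01 _ _] stat].
apply/integrableP; split.
  by apply/measurable_EFinP; exact: measurable_funM.
rewrite (eq_integral (fun l => (mu x l * xi e l)%:E)) ?stat ?ltry // => l _.
by rewrite gee0_abs // lee_fin mulr_ge0 //; case/andP: (xi_01 e l).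
Qed.

Let mu_dens_xiE s e l :
  ((mu_dens mu s l * xi e l)%:E =
   \sum_(p <- s) p.1%:E * (mu p.2 l * xi e l)%:E)%E.
Proof.
rewrite sumEFin /mu_dens mulr_suml; congr (_%:E).
by apply: eq_bigr => p _; rewrite mulrA.
Qed.

Lemma mu_dens_xi_integrable s e :
  nu.-integrable setT (fun l => (mu_dens mu s l * xi e l)%:E).
Proof.
under eq_fun do rewrite mu_dens_xiE.
by apply: integrable_sum => // p _; apply: integrableZl => //; exact: mu_xi_integrable.
Qed.

Lemma integral_mu_dens_xi s e :
  (\int[nu]_l (mu_dens mu s l * xi e l)%:E = (Pprep P e s)%:E)%E.
Proof.
under eq_integral do rewrite mu_dens_xiE.
rewrite integral_sum // => [|p]; last by apply: integrableZl => //; exact: mu_xi_integrable.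
rewrite /Pprep -sumEFin; apply: eq_bigr => p _.
by rewrite integralZl ?mu_xi_integrable //; case: model => _ [_ ->].
Qed.

Lemma Pprep_lincomb_ge0 (t : seq (R * (seq (R * D) * effect))) :
  (forall l, 0 <= \sum_(q <- t) q.1 * (mu_dens mu q.2.1 l * xi q.2.2 l)) ->
  0 <= \sum_(q <- t) q.1 * Pprep P q.2.2 q.2.1.
Proof.
move=> ont_ge0; rewrite -lee_fin -sumEFin.
have <- : (\int[nu]_l (\sum_(q <- t) q.1 * (mu_dens mu q.2.1 l * xi q.2.2 l))%:E
    = \sum_(q <- t) (q.1 * Pprep P q.2.2 q.2.1)%:E)%E.
  under eq_integral do rewrite -sumEFin.
  rewrite integral_sum // => [|q]; last first.
    under eq_fun do rewrite EFinM.
    by apply: integrableZl => //; exact: mu_dens_xi_integrable.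
  apply: eq_bigr => q _; under eq_integral do rewrite EFinM.
  by rewrite integralZl ?mu_dens_xi_integrable // integral_mu_dens_xi.
by apply: integral_ge0 => l _; rewrite lee_fin.
Qed.

Hypothesis noncontextual_mu_xi : noncontextual_model P mu xi.
Hypothesis HP : multitask_model P.

Lemma xi_false k l : xi (Eff k false) l = 1 - xi (Eff k true) l.
Proof.
have half_dens (e e' : effect) : density [:: (2^-1 : R, e); (2^-1, e')].
  by split; rewrite /= ?big_cons ?big_nil /=; lra.
have equiv : effect_equiv P [:: (2^-1, Eff k true); (2^-1, Eff k false)]
                            [:: (2^-1, Omega); (2^-1, Null)].
  by move=> x; rewrite /Peff !big_cons !big_nil /=; have := HP.2 k x; lra.
have := noncontextual_mu_xi.2 _ _ (half_dens _ _) (half_dens _ _) equiv l.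
rewrite /xi_dens !big_cons !big_nil /=.
by case: model => _ [[_ _ -> ->] _]; lra.
Qed.

Lemma xi_true_sum l :
  effect_equiv P
    [:: (3^-1, Eff task1 true); (3^-1, Eff task2 true); (3^-1, Eff task3 true)]
    [:: (3^-1, Eff task1 false); (3^-1, Eff task2 false); (3^-1, Eff task3 false)] ->
  xi (Eff task1 true) l + xi (Eff task2 true) l + xi (Eff task3 true) l = 3 / 2.
Proof.
have third_dens (e1 e2 e3 : effect) :
    density [:: (3^-1 : R, e1); (3^-1, e2); (3^-1, e3)].
  by split; rewrite /= ?big_cons ?big_nil /=; lra.
move=> /(noncontextual_mu_xi.2 _ _ (third_dens _ _ _) (third_dens _ _ _))/(_ l).
by rewrite /xi_dens !big_cons !big_nil /= !xi_false; lra.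
Qed.

End NoncontextualModel.

Theorem lemma1 (R : realType) (D : Type) (P : 'I_3 -> bool -> D -> R)
  (HP : multitask_model P)
  (Heff : effect_equiv P
     [:: (3^-1, Eff task1 true); (3^-1, Eff task2 true); (3^-1, Eff task3 true)]
     [:: (3^-1, Eff task1 false); (3^-1, Eff task2 false); (3^-1, Eff task3 false)])
  (s1 s2 s3 s4 s5 s6 : seq (R * D))
  (Hs1 : density s1) (Hs2 : density s2) (Hs3 : density s3)
  (Hs4 : density s4) (Hs5 : density s5) (Hs6 : density s6)
  (H12_34 : prep_equiv P (mix2 2^-1 s1 2^-1 s2) (mix2 2^-1 s3 2^-1 s4))
  (H34_56 : prep_equiv P (mix2 2^-1 s3 2^-1 s4) (mix2 2^-1 s5 2^-1 s6))
  (Hnc : noncontextual P) :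
  Pprep P (Eff task1 true) s1 + Pprep P (Eff task2 true) s3
    + Pprep P (Eff task3 true) s5 <= 5 / 2.
Proof.
case: Hnc => d [L [nu [mu [xi [model nc]]]]].
have half_mix (s s' : seq (R * D)) :
    density s -> density s' -> density (mix2 2^-1 s 2^-1 s').
  by apply: density_mix2; lra.
have d12 := half_mix _ _ Hs1 Hs2.
have d34 := half_mix _ _ Hs3 Hs4.
have d56 := half_mix _ _ Hs5 Hs6.
(* 5/2 minus the left-hand side, as a combination of statistics P(e | s). *)
pose t : seq (R * (seq (R * D) * effect)) :=
  [:: (2^-1, (s1, Omega)); (2^-1, (s3, Omega)); (2^-1, (s5, Omega));
      (1, (mix2 2^-1 s1 2^-1 s2, Omega));
      (-1, (s1, Eff task1 true)); (-1, (s3, Eff task2 true));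
      (-1, (s5, Eff task3 true))].
have ont_ge0 l : 0 <= \sum_(q <- t) q.1 * (mu_dens mu q.2.1 l * xi q.2.2 l).
  have [_ [[_ xi_01 xi_Omega _] _]] := model.
  have a_bd := mu_dens_le_mix2 model l Hs1 Hs2.
  have b_bd := mu_dens_le_mix2 model l Hs3 Hs4.
  have c_bd := mu_dens_le_mix2 model l Hs5 Hs6.
  rewrite -(nc.1 _ _ d12 d34 H12_34) in b_bd.
  rewrite -(nc.1 _ _ d34 d56 H34_56) -(nc.1 _ _ d12 d34 H12_34) in c_bd.
  have := weighted_sum3_le a_bd b_bd c_bd (xi_01 _ l) (xi_01 _ l) (xi_01 _ l)
    (xi_true_sum model nc HP l Heff).
  by rewrite !big_cons big_nil /= !xi_Omega; lra.
have := Pprep_lincomb_ge0 model ont_ge0.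
by rewrite !big_cons big_nil /= !Pprep_Omega //; lra.
Qed.
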